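(* Let $k=2r+1$ with $r\ge1$, $G=BS(1,k)$, and $m>0$. Let \[\mathcal{A}_m=\{a^{x_0}ta^{x_1}t\cdots a^{x_{m-1}}t\mid x_i\in\mathbb{Z},\ |x_i|\le r\}\setminus\{(a^{-r}t)^m\}.\] Then two words in $\mathcal{A}_m$ represent conjugate elements of $G$ if and only if they are cyclic permutations of each other, and every word in $\mathcal{A}_m$ is a conjugacy geodesic.
   Context: $BS(1,k)=\langle a,t\mid tat^{-1}=a^k\rangle$. $a^x$ denotes $|x|$ copies of $a$ or $a^{-1}$ according to the sign of $x$. Word length is with respect to $\{a,t\}$. A word is a conjugacy geodesic for the conjugacy class of the element it represents if it is a geodesic word and the element it represents has minimal length among all elements of its conjugacy class. *)

From mathcomp Require Import all_boot all_order all_algebra.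
Set Implicit Arguments. Unset Strict Implicit. Unset Printing Implicit Defensive.
Import GRing.Theory Num.Theory.

Inductive letter := LA | LAi | LT | LTi.

Definition word := seq letter.

Definition inv_letter (x : letter) : letter :=
  match x with LA => LAi | LAi => LA | LT => LTi | LTi => LT end.

Definition inv_word (w : word) : word := rev (map inv_letter w).

Definition apow (x : int) : word :=
  if (0 <= x)%R then nseq (absz x) LA else nseq (absz x) LAi.

Definition relator (k : nat) : word := [:: LT; LA; LTi] ++ nseq k LAi.

(* Equality in BS(1,k) = <a,t | t a t^-1 = a^k>: the equivalence relation on
   words generated by inserting/deleting trivial relators x x^-1 and the
   defining relator anywhere in a word. *)
Inductive bs_eq (k : nat) : word -> word -> Prop :=
| bs_refl w : bs_eq k w w
| bs_sym u v : bs_eq k u v -> bs_eq k v u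
| bs_trans u v w : bs_eq k u v -> bs_eq k v w -> bs_eq k u w
| bs_free u v x : bs_eq k (u ++ [:: x; inv_letter x] ++ v) (u ++ v)
| bs_rel u v : bs_eq k (u ++ relator k ++ v) (u ++ v).

Definition bs_conj (k : nat) (w v : word) : Prop :=
  exists u : word, bs_eq k (u ++ w ++ inv_word u) v.

Definition geodesic (k : nat) (w : word) : Prop :=
  forall w', bs_eq k w w' -> size w <= size w'.

Definition conj_geodesic (k : nat) (w : word) : Prop :=
  geodesic k w /\ forall w', bs_conj k w w' -> size w <= size w'.

Definition cyclic_perm (w v : word) : Prop := exists i : nat, rot i w = v.

Definition xword (xs : seq int) : word := flatten [seq apow x ++ [:: LT] | x <- xs].

Definition Aset (r m : nat) (w : word) : Prop :=
  (exists xs : seq int,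
      size xs = m /\ (forall x, x \in xs -> (`|x| <= r%:Z)%R) /\ w = xword xs)
  /\ w <> flatten (nseq m (apow (- r%:Z)%R ++ [:: LT])).

From HB Require Import structures.
From mathcomp Require Import all_boot all_order all_algebra.
From mathcomp Require Import zify ring.
Set Implicit Arguments. Unset Strict Implicit. Unset Printing Implicit Defensive.
Import Order.TTheory GRing.Theory Num.Theory.

(* Send BS(1,k) to the affine group of Z/(k^m - 1): a acts by x |-> x + 1 and t by
   x |-> k x, which is invertible because k * k^(m-1) = 1 mod k^m - 1.  The word
   a^x_0 t ... a^x_(m-1) t becomes x |-> k^m x + (x_0 + x_1 k + ... + x_(m-1) k^(m-1)),
   and conjugating it multiplies that balanced base-k numeral by a power of k, which
   modulo k^m - 1 rotates its digits.  Balanced m-digit numerals are distinct modulo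
   k^m - 1, except that "all digits r" and "all digits -r" coincide; this gives the
   conjugacy criterion.  For minimality, the image of any conjugate v can be built letter
   by letter as a balanced numeral, adding +-1 with carries for each a-letter without
   increasing the digit weight by more than one, while v has at least m letters t. *)

Definition letter_eqb (x y : letter) : bool :=
  match x, y with
  | LA, LA | LAi, LAi | LT, LT | LTi, LTi => true
  | _, _ => false
  end.

Lemma letter_eqP : Equality.axiom letter_eqb.
Proof. by case; case; constructor. Qed.

HB.instance Definition _ := hasDecEq.Build letter letter_eqP.

Lemma bs_eq_cat k p u v q : bs_eq k u v -> bs_eq k (p ++ u ++ q) (p ++ v ++ q).
Proof.
elim=> {u v} [w|u v _|u v w _ uv _ vw|u v x|u v]; last 2 first.
- by move: (bs_free k (p ++ u) (v ++ q) x); rewrite -!catA.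
- by move: (bs_rel k (p ++ u) (v ++ q)); rewrite -!catA.
- exact: bs_refl.
- exact: bs_sym.
- exact: bs_trans uv vw.
Qed.

Lemma inv_letterK : involutive inv_letter. Proof. by case. Qed.

Lemma inv_wordK : involutive inv_word.
Proof. by move=> w; rewrite /inv_word map_rev revK (mapK inv_letterK). Qed.

Lemma bs_eq_inv_cat k p : bs_eq k (inv_word p ++ p) [::].
Proof.
elim: p => [|x p IHp]; first exact: bs_refl.
rewrite /inv_word /= rev_cons -cats1 -catA; apply: bs_trans IHp.
by move: (bs_free k (inv_word p) p (inv_letter x)); rewrite inv_letterK.
Qed.

Lemma bs_eq_cat_inv k p : bs_eq k (p ++ inv_word p) [::].
Proof. by rewrite -{1}(inv_wordK p); apply: bs_eq_inv_cat. Qed.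

Lemma bs_conj_rot k i w : bs_conj k w (rot i w).
Proof.
exists (inv_word (take i w)); rewrite inv_wordK /rot.
have {2}-> : w = take i w ++ drop i w by rewrite cat_take_drop.
by move: (bs_eq_cat [::] (drop i w ++ take i w) (bs_eq_inv_cat k (take i w))); rewrite !catA.
Qed.

Lemma bs_eq_conj k u v : bs_eq k u v -> bs_conj k u v.
Proof. by exists [::]; rewrite cats0. Qed.

Lemma bs_eq_invariant k (T : Type) (f : word -> T) :
  (forall u v x, f (u ++ [:: x; inv_letter x] ++ v) = f (u ++ v)) ->
  (forall u v, f (u ++ relator k ++ v) = f (u ++ v)) ->
  forall u v, bs_eq k u v -> f u = f v.
Proof.
move=> f_free f_rel u v.
by elim=> {u v} [//|u v _ ->|u v w _ -> _ ->|u v x|u v]; rewrite ?f_free ?f_rel.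
Qed.

Local Open Scope ring_scope.

Lemma map_set_nth (T U : Type) (f : T -> U) x0 s i y :
  map f (set_nth x0 s i y) = set_nth (f x0) (map f s) i (f y).
Proof.
elim: s i => [|x s IHs] [|i] //=; last by rewrite IHs.
by congr (_ :: _); elim: i => //= i ->.
Qed.

Lemma all_set_nth (T : Type) (a : pred T) x0 s i y :
  (i < size s)%N -> all a s -> a y -> all a (set_nth x0 s i y).
Proof.
elim: s i => [|x s IHs] [|i] //= lt_i /andP[ax all_s] ay; first by rewrite ay.
by rewrite ax IHs.
Qed.

Section Numerals.

Variable k : int.

Definition numeral (s : seq int) : int := foldr (fun x acc => x + k * acc) 0 s.

Lemma numeral_cat s1 s2 : numeral (s1 ++ s2) = numeral s1 + k ^+ size s1 * numeral s2.
Proof. by elim: s1 => [|x s1 IHs] /=; rewrite ?mul1r ?add0r // IHs exprS; ring. Qed.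

Lemma numeral_opp s : numeral (map -%R s) = - numeral s.
Proof. by elim: s => [|x s IHs] //=; rewrite IHs; ring. Qed.

Lemma numeral_set_nth s i x : (i < size s)%N ->
  numeral (set_nth 0 s i x) = numeral s + (x - s`_i) * k ^+ i.
Proof.
elim: s i => [|y s IHs] [|i] //= lti; first by ring.
by rewrite IHs // exprS; ring.
Qed.

Lemma numeral_rot_cat p q :
  (numeral (q ++ p) = k ^+ size q * numeral (p ++ q) %[mod k ^+ (size p + size q) - 1])%Z.
Proof.
apply/eqP; rewrite eqz_mod_dvd !numeral_cat.
rewrite (_ : _ - _ = - ((k ^+ (size p + size q) - 1) * numeral q)) ?rpredN ?dvdz_mulr //.
by rewrite exprD; ring.
Qed.

Lemma numeral_rot i s :
  (numeral (rot i s) = k ^+ (size s - i) * numeral s %[mod k ^+ size s - 1])%Z.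
Proof.
by have := numeral_rot_cat (take i s) (drop i s); rewrite -size_cat cat_take_drop size_drop.
Qed.

Lemma expr_modn m d : (k ^+ d = k ^+ (d %% m) %[mod k ^+ m - 1])%Z.
Proof.
apply/eqP; rewrite eqz_mod_dvd {1}(divn_eq d m) exprD mulnC exprM.
rewrite (_ : _ - _ = ((k ^+ m) ^+ (d %/ m) - 1) * k ^+ (d %% m)); last by ring.
by rewrite dvdz_mulr // subrX1 dvdz_mulr.
Qed.

End Numerals.

Definition weight (s : seq int) : nat := sumn (map absz s).

Lemma weight_rot i s : weight (rot i s) = weight s.
Proof. by rewrite /weight map_rot sumn_rot. Qed.

Lemma weight_opp s : weight (map -%R s) = weight s.
Proof. by rewrite /weight -map_comp; congr sumn; apply: eq_map => x /=; rewrite abszN. Qed.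

Lemma weight_nseq_opp n (c : int) : weight (nseq n (- c)) = weight (nseq n c).
Proof. by rewrite /weight !map_nseq abszN. Qed.

Lemma weight_set_nth s i x : (i < size s)%N ->
  weight (set_nth 0 s i x) = (weight s + absz x - absz (s`_i)%R)%N.
Proof.
by move=> lt_i; rewrite /weight map_set_nth sumn_set_nth_ltn ?size_map // (nth_map 0).
Qed.

Definition tsum (w : word) : int := (count_mem LT w)%:Z - (count_mem LTi w)%:Z.

Lemma count_letters_le_size w :
  (count_mem LA w + count_mem LAi w + count_mem LT w <= size w)%N.
Proof. by elim: w => [|[] w IHw] //=; rewrite ?add0n ?add1n ?addnS ?addSn ?ltnS // leqW. Qed.

Lemma tsum_cat u v : tsum (u ++ v) = tsum u + tsum v.
Proof. by rewrite /tsum !count_cat !PoszD; ring. Qed.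

Lemma bs_eq_tsum k u v : bs_eq k u v -> tsum u = tsum v.
Proof.
have tsum_insert u' s v' : tsum s = 0 -> tsum (u' ++ s ++ v') = tsum (u' ++ v').
  by move=> s0; rewrite !tsum_cat s0 add0r.
apply: bs_eq_invariant => [u' v' x|u' v']; apply: tsum_insert.
  by case: x; rewrite /tsum /= subrr.
by rewrite /tsum /relator /=; elim: k.
Qed.

Lemma tsum_conj u w : tsum (u ++ w ++ inv_word u) = tsum w.
Proof.
have := bs_eq_tsum (bs_eq_cat_inv 0 u); rewrite !tsum_cat /=.
by move=> cancel_u; rewrite addrCA cancel_u addr0.
Qed.

Lemma xword_cons x xs : xword (x :: xs) = apow x ++ LT :: xword xs.
Proof. by rewrite /xword /= -catA. Qed.

Lemma xword_cat xs ys : xword (xs ++ ys) = xword xs ++ xword ys.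
Proof. by rewrite /xword map_cat flatten_cat. Qed.

Lemma xword_nseq m (c : int) : xword (nseq m c) = flatten (nseq m (apow c ++ [:: LT])).
Proof. by rewrite /xword map_nseq. Qed.

Lemma xword_rot i xs : xword (rot i xs) = rot (size (xword (take i xs))) (xword xs).
Proof.
have -> : xword xs = xword (take i xs) ++ xword (drop i xs) by rewrite -xword_cat cat_take_drop.
by rewrite rot_size_cat /rot xword_cat.
Qed.

Lemma size_xword xs : size (xword xs) = (size xs + weight xs)%N.
Proof.
elim: xs => [|x xs IHxs] //; rewrite xword_cons size_cat /= IHxs /weight /=.
by rewrite /apow; case: ifP => _; rewrite size_nseq; lia.
Qed.

Lemma tsum_xword xs : tsum (xword xs) = (size xs)%:Z.
Proof.
elim: xs => [|x xs IHxs] //; rewrite xword_cons tsum_cat -cat1s tsum_cat IHxs.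
rewrite (_ : tsum (apow x) = 0) ?add0r; last by rewrite /apow /tsum; case: ifP; elim: (absz x).
by rewrite /tsum /= -addn1 PoszD; ring.
Qed.

Section AffineRepresentation.

Variables (n : nat) (K k' : int).
Local Notation k := (n%:Z).

(* A word w acts on Z/K by x |-> aval w + slope w * x, with t^-1 acting through k'. *)
Fixpoint aval (w : word) : int :=
  match w with
  | [::] => 0
  | LA :: w => 1 + aval w
  | LAi :: w => - 1 + aval w
  | LT :: w => k * aval w
  | LTi :: w => k' * aval w
  end.

Definition slope (w : word) : int := k ^+ count_mem LT w * k' ^+ count_mem LTi w.

Lemma slope_cat u v : slope (u ++ v) = slope u * slope v.
Proof. by rewrite /slope !count_cat !exprD; ring. Qed.

Lemma aval_cat u v : aval (u ++ v) = aval u + slope u * aval v.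
Proof.
elim: u => [|[] u IHu] /=; first by rewrite /slope mul1r add0r.
all: by rewrite IHu /slope /= ?add0n ?exprS; ring.
Qed.

Lemma aval_nseq_LA j : aval (nseq j LA) = j%:Z.
Proof. by elim: j => [|j IHj] //=; rewrite IHj -addn1 PoszD addrC. Qed.

Lemma aval_nseq_LAi j : aval (nseq j LAi) = - j%:Z.
Proof. by elim: j => [|j IHj] //=; rewrite IHj -addn1 PoszD opprD addrC. Qed.

Lemma aval_apow x : aval (apow x) = x.
Proof.
rewrite /apow; case: x => j /=; first exact: aval_nseq_LA.
by rewrite aval_nseq_LAi NegzE -addn1 PoszD opprD addrC.
Qed.

Lemma slope_apow x : slope (apow x) = 1.
Proof. by rewrite /apow /slope; case: ifP => _; elim: (absz x) => //=; rewrite mulr1. Qed.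

Lemma aval_xword xs : aval (xword xs) = numeral k xs.
Proof.
by elim: xs => [|x xs IHxs] //=; rewrite xword_cons aval_cat aval_apow slope_apow mul1r /= IHxs.
Qed.

Lemma slope_xword xs : slope (xword xs) = k ^+ size xs.
Proof.
elim: xs => [|x xs IHxs]; first by rewrite /slope mulr1.
rewrite xword_cons slope_cat slope_apow mul1r -cat1s slope_cat IHxs.
by rewrite /slope /= expr1 expr0 mulr1 exprS.
Qed.

Hypothesis kk'_unit : (k * k' = 1 %[mod K])%Z.

Lemma aval_insert u s v :
  (aval s = 0 %[mod K])%Z -> (slope s = 1 %[mod K])%Z ->
  (aval (u ++ s ++ v) = aval (u ++ v) %[mod K])%Z.
Proof.
move=> /eqP + /eqP; rewrite !eqz_mod_dvd subr0 => s0 s1.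
apply/eqP; rewrite eqz_mod_dvd !aval_cat.
rewrite (_ : _ - _ = slope u * (aval s + (slope s - 1) * aval v)); last by ring.
by rewrite dvdz_mull // rpredD // dvdz_mulr.
Qed.

Lemma bs_eq_aval u v : bs_eq n u v -> (aval u = aval v %[mod K])%Z.
Proof.
move=> /(bs_eq_invariant (f := fun w => aval w %% K)%Z); apply => [u' v' x|u' v'].
  by apply: aval_insert; case: x; rewrite /slope /= ?expr0 ?expr1 ?mulr0 ?mul1r ?mulr1 ?subrr.
apply: aval_insert; rewrite /relator /slope /= ?count_nseq /= ?mul0n ?expr1 ?expr0 ?mulr1 //.
move/eqP: kk'_unit; rewrite eqz_mod_dvd => kk'1; apply/eqP; rewrite eqz_mod_dvd subr0 aval_nseq_LAi.
by rewrite (_ : _ * _ = - ((k * k' - 1) * k)) ?rpredN ?dvdz_mulr //; ring.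
Qed.

Lemma aval_conj u w :
  (slope w = 1 %[mod K])%Z -> (aval (u ++ w ++ inv_word u) = slope u * aval w %[mod K])%Z.
Proof.
move=> /eqP; rewrite eqz_mod_dvd => w1.
have /eqP := bs_eq_aval (bs_eq_cat_inv n u); rewrite eqz_mod_dvd aval_cat /= subr0 => cancel_u.
apply/eqP; rewrite eqz_mod_dvd !aval_cat.
rewrite (_ : _ - _ = aval u + slope u * aval (inv_word u)
                     + (slope w - 1) * (slope u * aval (inv_word u))); last by ring.
by rewrite rpredD // dvdz_mulr.
Qed.

End AffineRepresentation.

Section Balanced.

Variable r : nat.
Local Notation k := (2 * r + 1)%N%:Z.

Definition balanced (s : seq int) : bool := all (fun x => `|x| <= r%:Z) s.

Lemma balanced_rot i s : balanced (rot i s) = balanced s.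
Proof. by apply: perm_all; rewrite perm_rot. Qed.

Lemma balanced_opp s : balanced (map -%R s) = balanced s.
Proof. by rewrite /balanced all_map; apply: eq_all => x /=; rewrite normrN. Qed.

Lemma balanced_nseq n (c : int) : `|c| <= r%:Z -> balanced (nseq n c).
Proof. by move=> le_c; rewrite /balanced all_nseq le_c orbT. Qed.

Lemma numeral_bound s : balanced s -> 2 * `|numeral k s| <= k ^+ size s - 1.
Proof.
elim: s => [|x s IHs] /=; first by rewrite normr0 expr0 subrr mulr0.
case/andP=> le_x /IHs bound_s; rewrite exprS.
have k_gt0 : 0 < k by rewrite ltz_nat addn1.
have := ler_normD x (k * numeral k s); rewrite normrM gtr0_norm //.
have := ler_wpM2l (ltW k_gt0) bound_s.
nia.
Qed.

Lemma numeral_inj s1 s2 : balanced s1 -> balanced s2 -> size s1 = size s2 ->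
  numeral k s1 = numeral k s2 -> s1 = s2.
Proof.
elim: s1 s2 => [|x1 s1 IHs] [|x2 s2] //= /andP[le_x1 b1] /andP[le_x2 b2] [eq_size] eq_num.
suff eq_tail : numeral k s1 = numeral k s2.
  by rewrite (IHs s2) //; congr (_ :: _); move: eq_num; rewrite eq_tail; lia.
apply/eqP; apply: contraT => ne_tail.
have : k <= `|k * (numeral k s1 - numeral k s2)|.
  rewrite normrM gtr0_norm ?ltz_nat ?addn1 //; move: ne_tail; nia.
rewrite (_ : _ * _ = x2 - x1); last by move: eq_num; lia.
move: le_x1 le_x2; lia.
Qed.

Lemma numeral_nseq_r n : 2 * numeral k (nseq n r%:Z) = k ^+ n - 1.
Proof.
elim: n => [|n IHn] /=; first by rewrite mulr0 expr0 subrr.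
by rewrite exprS mulrDr mulrCA IHn; lia.
Qed.

Lemma numeral_top s : balanced s -> 2 * numeral k s = k ^+ size s - 1 ->
  s = nseq (size s) r%:Z.
Proof.
move=> bs top; apply: numeral_inj => //; first by rewrite balanced_nseq ?gez0_abs.
  by rewrite size_nseq.
by apply: (mulfI (_ : 2 != 0)); rewrite // top numeral_nseq_r.
Qed.

Lemma numeral_bottom s : balanced s -> 2 * numeral k s = - (k ^+ size s - 1) ->
  s = nseq (size s) (- r%:Z).
Proof.
move=> bs bottom; have bs' : balanced (map -%R s) by rewrite balanced_opp.
have top : 2 * numeral k (map -%R s) = k ^+ size (map -%R s) - 1.
  by rewrite numeral_opp size_map mulrN bottom opprK.
have /(congr1 (map -%R)) := numeral_top bs' top.
by rewrite (mapK opprK) size_map map_nseq.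
Qed.

Lemma numeral_eq_mod m s1 s2 : size s1 = m -> size s2 = m ->
  balanced s1 -> balanced s2 -> (numeral k s1 = numeral k s2 %[mod k ^+ m - 1])%Z ->
  [\/ s1 = s2, s1 = nseq m r%:Z /\ s2 = nseq m (- r%:Z)
    | s1 = nseq m (- r%:Z) /\ s2 = nseq m r%:Z].
Proof.
move=> size1 size2 b1 b2 /eqP; rewrite eqz_mod_dvd => /dvdzP[q eq_q].
have [eq_num|ne_num] := eqVneq (numeral k s1) (numeral k s2).
  by constructor 1; apply: numeral_inj; rewrite // size1 size2.
have := numeral_bound b1; have := numeral_bound b2; rewrite size1 size2.
move: eq_q ne_num; set K := k ^+ m - 1; set N1 := numeral k s1; set N2 := numeral k s2.
move=> eq_q ne_num bound2 bound1.
(* Both numerals lie in [-K/2, K/2], so they can differ only by a multiple 0 or +-K. *)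
have [[top1 bot2]|[bot1 top2]] : (2 * N1 = K /\ 2 * N2 = - K) \/ (2 * N1 = - K /\ 2 * N2 = K).
  have K_ge0 : 0 <= K by lia.
  have [q_neg|q_nneg] := ltrP q 0.
    have : q * K <= - K by nia.
    lia.
  have [q0|q_pos] := eqVneq q 0; first by move: ne_num eq_q; rewrite q0; lia.
  have : K <= q * K by nia.
  lia.
- constructor 2; split; first by rewrite -size1; apply: numeral_top; rewrite ?size1.
  by rewrite -size2; apply: numeral_bottom; rewrite ?size2.
- constructor 3; split; first by rewrite -size1; apply: numeral_bottom; rewrite ?size1.
  by rewrite -size2; apply: numeral_top; rewrite ?size2.
Qed.

Lemma numeral_eq_mod_weight m s1 s2 : size s1 = m -> size s2 = m ->
  balanced s1 -> balanced s2 -> (numeral k s1 = numeral k s2 %[mod k ^+ m - 1])%Z ->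
  weight s1 = weight s2.
Proof.
move=> size1 size2 b1 b2 /(numeral_eq_mod size1 size2 b1 b2).
by case=> [-> | [-> ->] | [-> ->]]; rewrite // weight_nseq_opp.
Qed.

Lemma balanced_add_pow m s h : (0 < r)%N -> size s = m -> (h < m)%N -> balanced s ->
  exists s', [/\ size s' = m, balanced s',
    (numeral k s' = numeral k s + k ^+ h %[mod k ^+ m - 1])%Z
    & (weight s' <= (weight s).+1)%N].
Proof.
move=> r_gt0; have [N] := ubnP (count_mem r%:Z s).
elim: N s h => // N IHN s h lt_count size_s lt_h bs.
have lt_hs : (h < size s)%N by rewrite size_s.
have le_sh : `|s`_h| <= r%:Z by apply: (allP bs); rewrite mem_nth.
(* Carry: replacing the digit r at h by -r subtracts (k - 1) k^h, so k^(h+1) remains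
   to be added; the number of digits equal to r decreases. *)
have [sh_r|sh_ne] := eqVneq s`_h r%:Z; last first.
  exists (set_nth 0 s h (s`_h + 1)); split.
  - by rewrite size_set_nth size_s; apply/maxn_idPr.
  - by apply: all_set_nth => //=; move: le_sh sh_ne; move: (s`_h) => x; lia.
  - by rewrite numeral_set_nth // addrAC subrr add0r mul1r.
  - by rewrite weight_set_nth //; lia.
pose s2 := set_nth 0 s h (- r%:Z).
have [s' [size_s' b' num_s' weight_s']] : exists s', [/\ size s' = m, balanced s',
    (numeral k s' = numeral k s2 + k ^+ (h.+1 %% m) %[mod k ^+ m - 1])%Z
    & (weight s' <= (weight s2).+1)%N].
  apply: IHN.
  - have neg_r : (- r%:Z == r%:Z) = false by apply/eqP; lia.
    have : (0 < count_mem r%:Z s)%N.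
      by rewrite -has_count; apply/hasP; exists s`_h; rewrite ?mem_nth //= sh_r.
    by rewrite /s2 count_set_nth_ltn // sh_r /= eqxx neg_r addn0 subn1 => c_gt0; rewrite -ltnS prednK.
  - by rewrite size_set_nth size_s; apply/maxn_idPr.
  - by rewrite ltn_pmod //; lia.
  - by apply: all_set_nth => //=; rewrite normrN.
exists s'; split => //; last by move: weight_s'; rewrite weight_set_nth // sh_r; lia.
rewrite num_s' -modzDmr -expr_modn modzDmr numeral_set_nth // sh_r exprS.
by congr (_ %% _)%Z; lia.
Qed.

Lemma balanced_sub_pow m s h : (0 < r)%N -> size s = m -> (h < m)%N -> balanced s ->
  exists s', [/\ size s' = m, balanced s',
    (numeral k s' = numeral k s - k ^+ h %[mod k ^+ m - 1])%Z
    & (weight s' <= (weight s).+1)%N].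
Proof.
move=> r_gt0 size_s lt_h bs.
have := @balanced_add_pow m (map -%R s) h r_gt0; rewrite size_map balanced_opp weight_opp.
case/(_ size_s lt_h bs) => s' [size_s' b' num_s' weight_s'].
exists (map -%R s'); split; rewrite ?size_map ?balanced_opp ?weight_opp //.
by rewrite numeral_opp -modzNm num_s' modzNm numeral_opp opprD opprK.
Qed.

End Balanced.

Section ConjugacyInBS.

Variables (r m : nat).
Hypotheses (r_gt0 : (0 < r)%N) (m_gt0 : (0 < m)%N).
Local Notation n := (2 * r + 1)%N.
Local Notation k := n%:Z.
Local Notation K := (k ^+ m - 1).
Local Notation aval := (aval n (k ^+ m.-1)).
Local Notation slope := (slope n (k ^+ m.-1)).

Lemma expr_m_mod : (k ^+ m = 1 %[mod K])%Z.
Proof. by rewrite -{1}(subrK 1 (k ^+ m)) modzDl. Qed.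

Lemma k_unit_mod : (k * k ^+ m.-1 = 1 %[mod K])%Z.
Proof. by rewrite -exprS prednK // expr_m_mod. Qed.

Lemma numeral_of_word v : exists s, [/\ size s = m, balanced r s,
  (numeral k s = aval v %[mod K])%Z & (weight s <= count_mem LA v + count_mem LAi v)%N].
Proof.
elim: v => [|l v [s [size_s bs num_s weight_s]]].
  exists (nseq m 0); rewrite size_nseq balanced_nseq //; split => //.
  - by rewrite (_ : numeral k _ = 0) //; elim: (m) => //= j ->; rewrite mulr0.
  - by rewrite /weight map_nseq sumn_nseq.
case: l => /=.
- have [s' [size_s' bs' num_s' weight_s']] := balanced_add_pow r_gt0 size_s m_gt0 bs.
  exists s'; split => //; last by rewrite add0n add1n addSn; apply: leq_trans weight_s' _.
  by rewrite num_s' expr0 addrC -modzDmr num_s modzDmr.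
- have [s' [size_s' bs' num_s' weight_s']] := balanced_sub_pow r_gt0 size_s m_gt0 bs.
  exists s'; split => //; last by rewrite !add0n add1n addnS; apply: leq_trans weight_s' _.
  by rewrite num_s' expr0 addrC -modzDmr num_s modzDmr.
- exists (rot m.-1 s); rewrite size_rot balanced_rot weight_rot; split => //.
  rewrite -size_s numeral_rot size_s (_ : m - m.-1 = 1)%N; last by lia.
  by rewrite expr1 -modzMmr num_s modzMmr.
- exists (rot 1 s); rewrite size_rot balanced_rot weight_rot; split => //.
  by rewrite -size_s numeral_rot size_s subn1 -modzMmr num_s modzMmr.
Qed.

Lemma bs_conj_xword xs v : size xs = m -> bs_conj n (xword xs) v ->
  tsum v = m%:Z /\ exists i, (aval v = numeral k (rot i xs) %[mod K])%Z.
Proof.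
move=> size_xs [u uv]; split; first by rewrite -(bs_eq_tsum uv) tsum_conj tsum_xword size_xs.
have w1 : (slope (xword xs) = 1 %[mod K])%Z by rewrite slope_xword size_xs expr_m_mod.
set d := (count_mem LT u + m.-1 * count_mem LTi u)%N.
have slope_u : slope u = k ^+ d by rewrite /slope -exprM -exprD.
have conj_val : (aval v = k ^+ d * numeral k xs %[mod K])%Z.
  by rewrite -(bs_eq_aval k_unit_mod uv) (aval_conj k_unit_mod) // slope_u aval_xword.
have rot_val : (numeral k (rot (m - d %% m) xs) = k ^+ (d %% m) * numeral k xs %[mod K])%Z.
  by have := numeral_rot k (m - d %% m) xs; rewrite size_xs subKn // ltnW // ltn_pmod.
exists (m - d %% m)%N.
by rewrite rot_val conj_val -modzMml expr_modn modzMml.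
Qed.

Lemma xword_conj_size xs v : size xs = m -> balanced r xs -> bs_conj n (xword xs) v ->
  (size (xword xs) <= size v)%N.
Proof.
move=> size_xs bxs /(bs_conj_xword size_xs) [tsum_v [i num_v]].
have [s [size_s bs num_s weight_s]] := numeral_of_word v.
have weight_xs : weight s = weight xs.
  rewrite -(weight_rot i xs); apply: (numeral_eq_mod_weight size_s _ bs).
  - by rewrite size_rot.
  - by rewrite balanced_rot.
  - by rewrite num_s num_v.
have count_LT : (m <= count_mem LT v)%N by move: tsum_v; rewrite /tsum; lia.
rewrite size_xword size_xs -weight_xs addnC.
by apply: leq_trans (count_letters_le_size v); apply: leq_add.
Qed.

Lemma xword_conj_rot xs ys : size xs = m -> size ys = m -> balanced r xs -> balanced r ys ->
  xs <> nseq m (- r%:Z) -> ys <> nseq m (- r%:Z) ->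
  bs_conj n (xword xs) (xword ys) -> exists i, ys = rot i xs.
Proof.
move=> size_xs size_ys bxs bys xs_ne ys_ne /(bs_conj_xword size_xs) [_ [i]].
have size_rot_xs : size (rot i xs) = m by rewrite size_rot.
have b_rot : balanced r (rot i xs) by rewrite balanced_rot.
rewrite aval_xword => /(numeral_eq_mod size_ys size_rot_xs bys b_rot).
case=> [-> | [_ rot_xs] | [ys_bot _]]; [by exists i | | by []].
case: xs_ne; rewrite -size_xs; apply/all_pred1P.
by apply/allP => x; rewrite -(mem_rot i) rot_xs => /nseqP[-> _] /=.
Qed.

End ConjugacyInBS.

Local Close Scope ring_scope.

Theorem lemma4p4 (r m : nat) (hr : 1 <= r) (hm : 0 < m) :
  (forall w v : word, Aset r m w -> Aset r m v ->
     (bs_conj (2 * r + 1) w v <-> cyclic_perm w v))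
  /\ (forall w : word, Aset r m w -> conj_geodesic (2 * r + 1) w).
Proof.
have balanced_of (xs : seq int) : (forall x, x \in xs -> `|x| <= r%:Z)%R -> balanced r xs.
  by move/allP.
split=> [w v [[xs [size_xs [/balanced_of bxs ->]]] w_ne] [[ys [size_ys [/balanced_of bys ->]]] v_ne]|].
  split=> [conj_wv | [i <-]]; last exact: bs_conj_rot.
  have [||i ->] := xword_conj_rot hm size_xs size_ys bxs bys _ _ conj_wv.
  - by move=> xs_bot; apply: w_ne; rewrite xs_bot xword_nseq.
  - by move=> ys_bot; apply: v_ne; rewrite ys_bot xword_nseq.
  by exists (size (xword (take i xs))); rewrite xword_rot.
move=> w [[xs [size_xs [/balanced_of bxs ->]]] _].
split=> [v /bs_eq_conj|v]; apply: (xword_conj_size hr hm size_xs bxs).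
Qed.
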